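(* For all $\theta\in\mathbb R$ and $\ell>0$ the function $a\mapsto R(\theta,a,\ell)$ is strictly decreasing on $(0,\infty)$. Moreover, for any $C_0\ge1$ there is a constant $C=C(C_0)\ge1$ such that for all $(\theta,a,\ell)\in\mathbb R\times(0,\infty)^2$ $$\max_{\alpha\in[a/C_0,C_0a]}|\partial_aR(\theta,\alpha,\ell)|\le C\min_{\alpha\in[a/C_0,C_0a]}|\partial_aR(\theta,\alpha,\ell)|.$$
   Context: Fix $m>0$. For $a,\ell>0$: $\kappa(a,\ell)=(1+4a^2\ell/m^2)^{-1/2}$, $p(a,\ell)=\frac{m}{2a^2\kappa(a,\ell)}$. For $\kappa\in(0,1)$, $G_\kappa(x)=\sqrt{x^2-1}-\kappa\ln(x+\sqrt{x^2-1})$ on $[1,\infty)$ and $H_\kappa=G_\kappa^{-1}:[0,\infty)\to[1,\infty)$. $R(\theta,a,\ell)=p(a,\ell)H_{\kappa(a,\ell)}(|\theta|/p(a,\ell))-p(a,\ell)\kappa(a,\ell)$, a smooth function on $\mathbb R\times(0,\infty)^2$. *)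

From Stdlib Require Import Reals Lra ClassicalEpsilon.
From Coquelicot Require Import Coquelicot.
Open Scope R_scope.

Definition kappa (m a l : R) : R := / sqrt (1 + 4 * a ^ 2 * l / m ^ 2).

Definition pp (m a l : R) : R := m / (2 * a ^ 2 * kappa m a l).

Definition G (k x : R) : R := sqrt (x ^ 2 - 1) - k * ln (x + sqrt (x ^ 2 - 1)).

(* H_k = G_k^{-1} : [0,oo) -> [1,oo): the (unique, for 0<k<1) x >= 1 with G_k x = y *)
Definition H (k y : R) : R :=
  epsilon (inhabits 1) (fun x => 1 <= x /\ G k x = y).

Definition Rfun (m theta a l : R) : R :=
  pp m a l * H (kappa m a l) (Rabs theta / pp m a l) - pp m a l * kappa m a l.

From Stdlib Require Import Reals Lra Psatz ClassicalEpsilon.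
From Coquelicot Require Import Coquelicot.
Open Scope R_scope.

(* With b = m / (2 a^2) and c = 2 l / m one has p = sqrt (b^2 + c b) and kappa = b / p, and
   the substitution |theta| = p sinh u - b u (u >= 0) turns R into p cosh u - b, because
   H_kappa (sinh u - kappa u) = cosh u.  Implicit differentiation in b gives dR/db = N / D with
     D = (p - b) + p (cosh u - 1),
     N = N0 + b c / (2 p) (cosh u - 1) + p (u sinh u - 2 cosh u + 2),   N0 > 0,
   so R is strictly decreasing in a.  When a ranges over [a / C0, C0 a], b moves within a
   factor K = C0^4, and every nonnegative summand of N and D then changes by a factor bounded
   in terms of K alone.  For the summands depending on b only this is elementary; for those in u
   it follows from sinh u - kappa u = |theta| / p, which for b1 <= b2 forces u2 <= u1 <= K u2
   and sinh u1 <= 2 K sinh u2, together with cosh u - 1 ~ u^2 / 2 and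
   u sinh u - 2 cosh u + 2 ~ u^4 / 12 on bounded ranges of u. *)

(** * Monotonicity and differentiability criteria *)

Lemma le_of_derive_le (f g df dg : R -> R) (a x : R) :
  a <= x -> f a <= g a ->
  (forall t, a <= t <= x -> is_derive f t (df t)) ->
  (forall t, a <= t <= x -> is_derive g t (dg t)) ->
  (forall t, a <= t <= x -> df t <= dg t) ->
  f x <= g x.
Proof.
  intros Hax Ha Hf Hg Hd.
  assert (Hgf : forall t, a <= t <= x -> is_derive (fun t => g t - f t) t (dg t - df t))
    by (intros t Ht; apply (is_derive_minus g f); auto).
  destruct (MVT_gen (fun t => g t - f t) a x (fun t => dg t - df t)) as [c [Hc Heq]];
    rewrite Rmin_left, Rmax_right in * by lra.
  - intros t Ht; apply Hgf; lra.
  - intros t Ht; apply derivable_continuous_pt; exists (dg t - df t).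
    apply is_derive_Reals, Hgf; lra.
  - assert (0 <= (dg c - df c) * (x - a))
      by (apply Rmult_le_pos; [generalize (Hd c Hc); lra | lra]).
    lra.
Qed.

Definition slope (f : R -> R) (d x0 x : R) : R :=
  if Req_EM_T x x0 then d else (f x - f x0) / (x - x0).

Lemma slope_spec (f : R -> R) (d x0 x : R) : f x - f x0 = slope f d x0 x * (x - x0).
Proof.
  unfold slope; destruct (Req_EM_T x x0) as [->|Hne]; [ring|].
  field; lra.
Qed.

Lemma slope_continuous (f : R -> R) (d x0 : R) :
  is_derive f x0 d -> continuous (slope f d x0) x0.
Proof.
  intros Hf%is_derive_Reals. apply continuity_pt_filterlim. intros eps Heps.
  destruct (Hf eps Heps) as [delta Hdelta].
  exists delta; split; [apply cond_pos|]. intros x [[_ Hx] Hxd]. simpl in *. unfold R_dist in *.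
  unfold slope. destruct (Req_EM_T x0 x0) as [_|]; [|easy].
  destruct (Req_EM_T x x0) as [->|Hne]; [easy|].
  specialize (Hdelta (x - x0) ltac:(lra) Hxd). now replace (x0 + (x - x0)) with x in Hdelta by ring.
Qed.

Lemma is_derive_of_slope (f g : R -> R) (x0 delta : R) :
  0 < delta -> (forall x, Rabs (x - x0) < delta -> f x - f x0 = g x * (x - x0)) ->
  continuous g x0 -> is_derive f x0 (g x0).
Proof.
  intros Hdelta Hfg Hg%continuity_pt_filterlim. apply is_derive_Reals. intros eps Heps.
  destruct (Hg eps Heps) as [d [Hd Hgd]]. simpl in Hgd. unfold R_dist in Hgd.
  exists (mkposreal _ (Rmin_glb_lt _ _ _ Hd Hdelta)). intros h Hh Hhd. simpl in Hhd.
  assert (Hh1 : Rabs h < d) by (eapply Rlt_le_trans; [exact Hhd | apply Rmin_l]).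
  assert (Hh2 : Rabs (x0 + h - x0) < delta)
    by (replace (x0 + h - x0) with h by ring; eapply Rlt_le_trans; [exact Hhd | apply Rmin_r]).
  rewrite (Hfg _ Hh2). replace (g (x0 + h) * (x0 + h - x0) / h) with (g (x0 + h)) by (field; auto).
  destruct (Req_dec h 0) as [->|]; [easy|].
  apply Hgd. split; [split; [easy | lra] | now replace (x0 + h - x0) with h by ring].
Qed.

Lemma continuous_of_lipschitz_at (f : R -> R) (x0 delta L : R) :
  0 < delta -> (forall x, Rabs (x - x0) < delta -> Rabs (f x - f x0) <= L * Rabs (x - x0)) ->
  continuous f x0.
Proof.
  intros Hdelta Hf. apply continuity_pt_filterlim. intros eps Heps.
  assert (HL : 0 < Rabs L + 1) by (generalize (Rabs_pos L); lra).
  exists (Rmin delta (eps / (Rabs L + 1))).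
  split; [apply Rmin_glb_lt; [lra | apply Rdiv_lt_0_compat; lra]|].
  intros x [_ Hx]. simpl in *. unfold R_dist in *.
  assert (Hx1 : Rabs (x - x0) < delta) by (eapply Rlt_le_trans; [exact Hx | apply Rmin_l]).
  assert (Hx2 : Rabs (x - x0) < eps / (Rabs L + 1))
    by (eapply Rlt_le_trans; [exact Hx | apply Rmin_r]).
  assert (L * Rabs (x - x0) <= Rabs L * Rabs (x - x0))
    by (apply Rmult_le_compat_r; [apply Rabs_pos | apply RRle_abs]).
  assert ((Rabs L + 1) * Rabs (x - x0) < eps)
    by (apply (Rmult_lt_reg_r (/ (Rabs L + 1))); [apply Rinv_0_lt_compat; lra|];
        field_simplify; lra).
  generalize (Hf x Hx1) (Rabs_pos (x - x0)). nra.
Qed.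

(** * Hyperbolic inequalities *)

Ltac derive_hyperbolic := intros; unfold sinh, cosh; auto_derive; try easy; field.

Lemma cosh_sq_sub_sinh_sq x : cosh x ^ 2 - sinh x ^ 2 = 1.
Proof.
  unfold cosh, sinh. rewrite exp_Ropp. assert (exp x <> 0) by apply Rgt_not_eq, exp_pos.
  field; auto.
Qed.

Lemma cosh_add_sinh x : cosh x + sinh x = exp x.
Proof. unfold cosh, sinh. field. Qed.

Lemma cosh_sub_sinh x : cosh x - sinh x = exp (- x).
Proof. unfold cosh, sinh. field. Qed.

Lemma sinh_lt_cosh x : sinh x < cosh x.
Proof. generalize (cosh_sub_sinh x) (exp_pos (- x)). lra. Qed.

Lemma cosh_ge_1 x : 1 <= cosh x.
Proof.
  assert (0 < cosh x) by (unfold cosh; generalize (exp_pos x) (exp_pos (- x)); lra).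
  generalize (cosh_sq_sub_sinh_sq x) (pow2_ge_0 (sinh x)). nra.
Qed.

Lemma sinh_nonneg x : 0 <= x -> 0 <= sinh x.
Proof.
  intros [Hx | <-]; [rewrite <- sinh_0; left; now apply sinh_lt | now rewrite sinh_0; right].
Qed.

Lemma sinh_sub_ge x y : x <= y -> y - x <= sinh y - sinh x.
Proof.
  intros Hxy. apply (le_of_derive_le (fun t => t - x) (fun t => sinh t - sinh x)
    (fun _ => 1) cosh x y); [lra | lra | derive_hyperbolic .. | intros; apply cosh_ge_1].
Qed.

Lemma sinh_ge_id x : 0 <= x -> x <= sinh x.
Proof. intros Hx. generalize (sinh_sub_ge 0 x Hx). rewrite sinh_0. lra. Qed.

Lemma cosh_le_cosh x y : 0 <= x -> x <= y -> cosh x <= cosh y.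
Proof.
  intros Hx Hxy. apply (le_of_derive_le (fun _ => cosh x) cosh (fun _ => 0) sinh x y);
    [lra | lra | intros; auto_derive; [easy | ring] | derive_hyperbolic
    | intros; apply sinh_nonneg; lra].
Qed.

Lemma cosh_sub_1_le_sinh x : 0 <= x -> cosh x - 1 <= sinh x.
Proof.
  intros Hx. apply (le_of_derive_le (fun t => cosh t - 1) sinh sinh cosh 0 x);
    [lra | rewrite cosh_0, sinh_0; lra | derive_hyperbolic .. | intros; left; apply sinh_lt_cosh].
Qed.

Lemma cosh_sub_1_ge x : 0 <= x -> x ^ 2 / 2 <= cosh x - 1.
Proof.
  intros Hx.
  apply (le_of_derive_le (fun t => t ^ 2 / 2) (fun t => cosh t - 1) (fun t => t) sinh 0 x);
    [lra | rewrite cosh_0; lra | intros; auto_derive; [easy | field] | derive_hyperbolic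
    | intros t Ht; apply sinh_ge_id; lra].
Qed.

Lemma sinh_le_mul_cosh x : 0 <= x -> sinh x <= x * cosh x.
Proof.
  intros Hx.
  apply (le_of_derive_le sinh (fun t => t * cosh t) cosh (fun t => cosh t + t * sinh t) 0 x);
    [lra | rewrite sinh_0; lra | derive_hyperbolic ..
    | intros t Ht; generalize (sinh_nonneg t ltac:(lra)); nra].
Qed.

Lemma cosh_sub_1_le x : 0 <= x -> cosh x - 1 <= x ^ 2 / 2 * cosh x.
Proof.
  intros Hx. apply (le_of_derive_le (fun t => cosh t - 1) (fun t => t ^ 2 / 2 * cosh t)
    sinh (fun t => t * cosh t + t ^ 2 / 2 * sinh t) 0 x);
    [lra | rewrite cosh_0; lra | derive_hyperbolic ..
    | intros t Ht; generalize (sinh_le_mul_cosh t ltac:(lra)) (sinh_nonneg t ltac:(lra)); nra].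
Qed.

Definition hh (u : R) : R := u * sinh u - 2 * cosh u + 2.

Lemma mul_cosh_sub_sinh_ge x : 0 <= x -> x ^ 3 / 3 <= x * cosh x - sinh x.
Proof.
  intros Hx. apply (le_of_derive_le (fun t => t ^ 3 / 3) (fun t => t * cosh t - sinh t)
    (fun t => t ^ 2) (fun t => t * sinh t) 0 x);
    [lra | rewrite sinh_0; lra | intros; auto_derive; [easy | field] | derive_hyperbolic
    | intros t Ht; generalize (sinh_ge_id t ltac:(lra)); nra].
Qed.

Lemma mul_cosh_sub_sinh_le x : 0 <= x -> x * cosh x - sinh x <= x ^ 3 / 3 * cosh x.
Proof.
  intros Hx. apply (le_of_derive_le (fun t => t * cosh t - sinh t) (fun t => t ^ 3 / 3 * cosh t)
    (fun t => t * sinh t) (fun t => t ^ 2 * cosh t + t ^ 3 / 3 * sinh t) 0 x);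
    [lra | rewrite sinh_0; lra | derive_hyperbolic ..
    | intros t Ht; generalize (sinh_le_mul_cosh t ltac:(lra)) (sinh_nonneg t ltac:(lra))
        (pow_le t 3 ltac:(lra)); intros; nra].
Qed.

Lemma hh_ge x : 0 <= x -> x ^ 4 / 12 <= hh x.
Proof.
  intros Hx. apply (le_of_derive_le (fun t => t ^ 4 / 12) hh (fun t => t ^ 3 / 3)
    (fun t => t * cosh t - sinh t) 0 x);
    [lra | unfold hh; rewrite sinh_0, cosh_0; lra | intros; auto_derive; [easy | field]
    | unfold hh; derive_hyperbolic | intros t Ht; apply mul_cosh_sub_sinh_ge; lra].
Qed.

Lemma hh_le x : 0 <= x -> hh x <= x ^ 4 / 12 * cosh x.
Proof.
  intros Hx. apply (le_of_derive_le hh (fun t => t ^ 4 / 12 * cosh t)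
    (fun t => t * cosh t - sinh t) (fun t => t ^ 3 / 3 * cosh t + t ^ 4 / 12 * sinh t) 0 x);
    [lra | unfold hh; rewrite sinh_0, cosh_0; lra | unfold hh; derive_hyperbolic
    | derive_hyperbolic
    | intros t Ht; generalize (mul_cosh_sub_sinh_le t ltac:(lra)) (sinh_nonneg t ltac:(lra))
        (pow_le t 4 ltac:(lra)); nra].
Qed.

Lemma hh_le_hh x y : 0 <= x -> x <= y -> hh x <= hh y.
Proof.
  intros Hx Hxy.
  apply (le_of_derive_le (fun _ => hh x) hh (fun _ => 0) (fun t => t * cosh t - sinh t) x y);
    [lra | lra | intros; auto_derive; [easy | ring] | unfold hh; derive_hyperbolic
    | intros t Ht; generalize (mul_cosh_sub_sinh_ge t ltac:(lra)) (pow_le t 3 ltac:(lra)); lra].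
Qed.

Lemma sinh_mul_ge K x : 1 <= K -> 0 <= x -> K * sinh x <= sinh (K * x).
Proof.
  intros HK Hx. apply (le_of_derive_le (fun k => k * sinh x) (fun k => sinh (k * x))
    (fun _ => sinh x) (fun k => x * cosh (k * x)) 1 K);
    [lra | rewrite !Rmult_1_l; lra | intros; auto_derive; [easy | ring] | derive_hyperbolic
    | intros k Hk; assert (x <= k * x) by nra;
      generalize (cosh_le_cosh x (k * x) Hx ltac:(lra)) (sinh_le_mul_cosh x Hx); intros; nra].
Qed.

(** * The parametrization of R by u *)

Lemma sinh_mul_sub_lt P b u v : 0 <= b < P -> u < v -> P * sinh u - b * u < P * sinh v - b * v.
Proof. intros Hb Huv. generalize (sinh_sub_ge u v ltac:(lra)). nra. Qed.

Lemma sinh_mul_sub_inj P b u v : 0 <= b < P ->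
  P * sinh u - b * u = P * sinh v - b * v -> u = v.
Proof.
  intros Hb Huv. destruct (Rtotal_order u v) as [Hlt | [Heq | Hgt]]; auto.
  - generalize (sinh_mul_sub_lt P b u v Hb Hlt). lra.
  - generalize (sinh_mul_sub_lt P b v u Hb Hgt). lra.
Qed.

Lemma sinh_mul_sub_surj P b T : 0 <= b < P -> 0 <= T ->
  exists u, 0 <= u /\ P * sinh u - b * u = T.
Proof.
  intros Hb HT. set (M := T / (P - b)).
  assert (HM : 0 <= M) by (apply Rdiv_le_0_compat; lra).
  assert (HMT : T <= P * sinh M - b * M).
  { replace T with ((P - b) * M) by (unfold M; field; lra). generalize (sinh_ge_id M HM). nra. }
  destruct (IVT_gen (fun u => P * sinh u - b * u) 0 M T) as [u [Hu Hfu]].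
  - intros u. apply derivable_continuous_pt. exists (P * cosh u - b).
    apply is_derive_Reals. derive_hyperbolic.
  - rewrite sinh_0, Rmin_left, Rmax_right; lra.
  - rewrite Rmin_left in Hu by lra. exists u. split; [lra | auto].
Qed.

Lemma cosh_surj x : 1 <= x -> exists v, 0 <= v /\ cosh v = x.
Proof.
  intros Hx. set (s := sqrt (x ^ 2 - 1)).
  assert (Hs : 0 <= s) by apply sqrt_pos.
  assert (Hss : s * s = x ^ 2 - 1) by (apply sqrt_sqrt; nra).
  assert (Hexp : exp (ln (x + s)) = x + s) by (apply exp_ln; lra).
  exists (ln (x + s)). split.
  - rewrite <- ln_1. apply ln_le; lra.
  - unfold cosh. rewrite exp_Ropp, Hexp. field_simplify_eq; nra.
Qed.

Lemma G_cosh k v : 0 <= v -> G k (cosh v) = sinh v - k * v.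
Proof.
  intros Hv. unfold G.
  replace (cosh v ^ 2 - 1) with (sinh v ^ 2) by (generalize (cosh_sq_sub_sinh_sq v); lra).
  rewrite sqrt_pow2 by now apply sinh_nonneg.
  now rewrite cosh_add_sinh, ln_exp.
Qed.

Lemma H_sinh_sub k u : 0 <= k < 1 -> 0 <= u -> H k (sinh u - k * u) = cosh u.
Proof.
  intros Hk Hu. unfold H.
  destruct (epsilon_spec (inhabits 1) (fun x => 1 <= x /\ G k x = sinh u - k * u)) as [Hx HG].
  { exists (cosh u). split; [apply cosh_ge_1 | now apply G_cosh]. }
  set (x := epsilon _ _) in *. destruct (cosh_surj x Hx) as [v [Hv Hvx]].
  rewrite <- Hvx in HG |- *. rewrite G_cosh in HG by auto.
  f_equal. apply (sinh_mul_sub_inj 1 k); lra.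
Qed.

Definition pb (c b : R) : R := sqrt (b * b + c * b).

Section Pb.

Variable c : R.
Hypothesis c_pos : 0 < c.

Lemma pb_sq b : 0 < b -> pb c b * pb c b = b * b + c * b.
Proof. intros Hb. apply sqrt_sqrt. nra. Qed.

Lemma pb_gt b : 0 < b -> b < pb c b.
Proof.
  intros Hb. generalize (pb_sq b Hb) (sqrt_pos (b * b + c * b)). fold (pb c b). intros HP HP0.
  assert (0 < c * b) by nra. destruct (Rlt_or_le b (pb c b)); [auto | nra].
Qed.

Lemma div_pb_range b : 0 < b -> 0 <= b / pb c b < 1.
Proof.
  intros Hb. generalize (pb_gt b Hb). intros HbP.
  split; [apply Rdiv_le_0_compat | apply (Rmult_lt_reg_r (pb c b)); [| field_simplify]]; lra.
Qed.

Lemma pb_sub_eq b : 0 < b -> pb c b - b = c * b / (pb c b + b).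
Proof. intros Hb. generalize (pb_sq b Hb) (pb_gt b Hb). intros. field_simplify_eq; nra. Qed.

Lemma is_derive_pb b : 0 < b -> is_derive (pb c) b ((2 * b + c) / (2 * pb c b)).
Proof.
  intros Hb. generalize (pb_gt b Hb). unfold pb. intros. auto_derive; [nra | field; lra].
Qed.

Lemma pb_sub_le b1 b2 : 0 < b1 -> b1 <= b2 -> pb c b1 - b1 <= pb c b2 - b2.
Proof.
  intros Hb1 Hb12.
  apply (le_of_derive_le (fun _ => pb c b1 - b1) (fun b => pb c b - b)
    (fun _ => 0) (fun b => (2 * b + c) / (2 * pb c b) - 1) b1 b2); [lra | lra | | |].
  - intros; auto_derive; [easy | ring].
  - intros b Hb. generalize (pb_gt b ltac:(lra)). unfold pb. intros.
    auto_derive; [nra | field; lra].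
  - intros b Hb. generalize (pb_sq b ltac:(lra)) (pb_gt b ltac:(lra)). intros HP HbP.
    assert (2 * pb c b <= 2 * b + c) by nra.
    cut (1 <= (2 * b + c) / (2 * pb c b)); [lra|].
    apply (Rmult_le_reg_r (2 * pb c b)); [lra|]. unfold Rdiv.
    rewrite Rmult_assoc, Rinv_l, Rmult_1_r; lra.
Qed.

(* [b / pb c b] is the paper's kappa. *)
Lemma kappa_le b1 b2 : 0 < b1 -> b1 <= b2 -> b1 * pb c b2 <= b2 * pb c b1.
Proof.
  intros Hb1 Hb12.
  generalize (pb_sq b1 Hb1) (pb_gt b1 Hb1) (pb_sq b2 ltac:(lra)) (pb_gt b2 ltac:(lra)).
  set (P1 := pb c b1). set (P2 := pb c b2). intros HP1 HbP1 HP2 HbP2.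
  assert (b1 * P2 * (b1 * P2) <= b2 * P1 * (b2 * P1)).
  { replace (b1 * P2 * (b1 * P2)) with (b1 * b1 * (P2 * P2)) by ring.
    replace (b2 * P1 * (b2 * P1)) with (b2 * b2 * (P1 * P1)) by ring.
    rewrite HP1, HP2.
    assert (0 <= b1 * b2 * c * (b2 - b1)) by (repeat apply Rmult_le_pos; lra). nra. }
  assert (0 < b1 * P2) by nra. assert (0 < b2 * P1) by nra.
  destruct (Rle_or_lt (b1 * P2) (b2 * P1)); [auto | nra].
Qed.

Lemma pb_lipschitz b0 b : 0 < b0 -> 0 < b ->
  Rabs (pb c b - pb c b0) <= (1 + c / pb c b0) * Rabs (b - b0).
Proof.
  intros Hb0 Hb.
  generalize (pb_sq b0 Hb0) (pb_gt b0 Hb0) (pb_sq b Hb) (pb_gt b Hb).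
  set (P0 := pb c b0). set (P := pb c b). intros HP0 HbP0 HP HbP.
  assert (Hid : P - P0 = (b - b0) * ((b + b0 + c) / (P + P0))) by (field_simplify_eq; nra).
  rewrite Hid, Rabs_mult, Rmult_comm. apply Rmult_le_compat_r; [apply Rabs_pos|].
  rewrite Rabs_right by (apply Rle_ge, Rdiv_le_0_compat; lra).
  apply (Rmult_le_reg_r (P + P0)); [lra|]. unfold Rdiv.
  rewrite Rmult_assoc, Rinv_l, Rmult_1_r by lra.
  assert (c * / P0 * P >= 0)
    by (apply Rle_ge; repeat apply Rmult_le_pos; try apply Rlt_le, Rinv_0_lt_compat; lra).
  replace ((1 + c * / P0) * (P + P0)) with (P + P0 + c * / P0 * P + c) by (field; lra). lra.
Qed.

End Pb.

(* For [c, b > 0] and [T >= 0] the defining equation has exactly one solution [u >= 0]. *)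
Definition ub (c T b : R) : R :=
  epsilon (inhabits 0) (fun u => 0 <= u /\ pb c b * sinh u - b * u = T).

Definition Rb (c T b : R) : R := pb c b * cosh (ub c T b) - b.

Lemma ub_spec c T b : 0 < c -> 0 <= T -> 0 < b ->
  0 <= ub c T b /\ pb c b * sinh (ub c T b) - b * ub c T b = T.
Proof.
  intros Hc HT Hb. unfold ub.
  apply epsilon_spec, sinh_mul_sub_surj; [split; [lra | now apply pb_gt] | auto].
Qed.

Lemma div_2sq_pos m a : 0 < m -> 0 < a -> 0 < m / (2 * a ^ 2).
Proof.
  intros Hm Ha. apply Rdiv_lt_0_compat; [lra | apply Rmult_lt_0_compat; [lra | apply pow_lt; lra]].
Qed.

Lemma Rfun_eq m theta a l : 0 < m -> 0 < a -> 0 < l ->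
  Rfun m theta a l = Rb (2 * l / m) (Rabs theta) (m / (2 * a ^ 2)).
Proof.
  intros Hm Ha Hl. set (b := m / (2 * a ^ 2)). set (c := 2 * l / m).
  assert (Hb : 0 < b) by now apply div_2sq_pos.
  assert (Hc : 0 < c) by (apply Rdiv_lt_0_compat; lra).
  set (S := 1 + 4 * a ^ 2 * l / m ^ 2).
  assert (HS : 0 < S).
  { assert (0 < 4 * a ^ 2 * l / m ^ 2); [|unfold S; lra].
    apply Rdiv_lt_0_compat; [|apply pow_lt; lra].
    apply Rmult_lt_0_compat; [apply Rmult_lt_0_compat; [lra | apply pow_lt; lra] | lra]. }
  assert (HsS := sqrt_lt_R0 _ HS).
  assert (Hpp : pp m a l = pb c b).
  { unfold pp, kappa, pb. fold S. replace (b * b + c * b) with (b * b * S).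
    - rewrite sqrt_mult, sqrt_square by nra. unfold b. field. split; lra.
    - unfold S, b, c. field. split; lra. }
  assert (Hkappa : kappa m a l = b / pb c b).
  { rewrite <- Hpp. unfold pp, b. field. split; [apply Rgt_not_eq, Rinv_0_lt_compat; auto | lra]. }
  generalize (pb_gt c Hc b Hb). intros HbP.
  destruct (ub_spec c (Rabs theta) b Hc (Rabs_pos theta) Hb) as [Hu Hub].
  set (u := ub c (Rabs theta) b) in *. set (P := pb c b) in *.
  assert (Hk := div_pb_range c Hc b Hb). fold P in Hk.
  unfold Rfun, Rb. fold u. rewrite Hpp, Hkappa. fold P.
  replace (Rabs theta / P) with (sinh u - b / P * u) by (rewrite <- Hub; field; lra).
  rewrite H_sinh_sub by auto. field. lra.
Qed.

(** * The derivative in b *)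

Lemma slope_sinh_ge_1 x0 x : 1 <= slope sinh (cosh x0) x0 x.
Proof.
  unfold slope. destruct (Req_EM_T x x0) as [_ | Hne]; [apply cosh_ge_1|].
  destruct (Rlt_or_le x x0) as [Hlt | Hle].
  - generalize (sinh_sub_ge x x0 ltac:(lra)). intros.
    replace ((sinh x - sinh x0) / (x - x0)) with ((sinh x0 - sinh x) / (x0 - x)) by (field; lra).
    apply (Rmult_le_reg_r (x0 - x)); [lra|]. field_simplify; lra.
  - generalize (sinh_sub_ge x0 x Hle). intros.
    apply (Rmult_le_reg_r (x - x0)); [lra|]. field_simplify; lra.
Qed.

Section Ub.

Variables c T : R.
Hypotheses (c_pos : 0 < c) (T_nonneg : 0 <= T).

Lemma ub_antitone b1 b2 : 0 < b1 -> b1 <= b2 -> ub c T b2 <= ub c T b1.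
Proof.
  intros Hb1 Hb12.
  destruct (ub_spec c T b1 c_pos T_nonneg Hb1) as [Hu1 E1].
  destruct (ub_spec c T b2 c_pos T_nonneg ltac:(lra)) as [Hu2 E2].
  generalize (pb_sub_le c c_pos b1 b2 Hb1 Hb12) (pb_gt c c_pos b1 Hb1) (sinh_ge_id _ Hu2).
  set (u1 := ub c T b1) in *. set (u2 := ub c T b2) in *. intros HP HbP Hs.
  destruct (Rle_or_lt u2 u1) as [|Hlt]; [auto | exfalso].
  generalize (sinh_mul_sub_lt (pb c b1) b1 u1 u2 ltac:(lra) Hlt). intros.
  assert ((b2 - b1) * u2 <= (pb c b2 - pb c b1) * sinh u2).
  { apply Rle_trans with ((b2 - b1) * sinh u2);
      [apply Rmult_le_compat_l | apply Rmult_le_compat_r]; lra. }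
  lra.
Qed.

Lemma ub_secant_eq b0 b : 0 < b0 -> 0 < b ->
  (ub c T b - ub c T b0) * (pb c b0 * slope sinh (cosh (ub c T b0)) (ub c T b0) (ub c T b) - b0)
  = (b - b0) * ub c T b - (pb c b - pb c b0) * sinh (ub c T b).
Proof.
  intros Hb0 Hb.
  destruct (ub_spec c T b c_pos T_nonneg Hb) as [_ E].
  destruct (ub_spec c T b0 c_pos T_nonneg Hb0) as [_ E0].
  generalize (slope_spec sinh (cosh (ub c T b0)) (ub c T b0) (ub c T b)).
  set (q := slope _ _ _ _). set (u := ub c T b) in *. set (u0 := ub c T b0) in *. intros Hq.
  transitivity (pb c b0 * (q * (u - u0)) - b0 * (u - u0)); [ring|].
  rewrite <- Hq. lra.
Qed.

(* By [ub_secant_eq], and since slopes of sinh are at least 1, [ub] is Lipschitz at [b0];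
   near [b0], [ub] is bounded by [ub (b0 / 2)] because it is antitone. *)
Lemma ub_continuous b0 : 0 < b0 -> continuous (ub c T) b0.
Proof.
  intros Hb0. generalize (pb_gt c c_pos b0 Hb0). intros HbP0.
  set (L := 1 + c / pb c b0). set (Umax := ub c T (b0 / 2)).
  assert (HL : 0 <= L)
    by (unfold L; assert (0 <= c / pb c b0) by (apply Rdiv_le_0_compat; lra); lra).
  apply (continuous_of_lipschitz_at _ b0 (b0 / 2) ((1 + L) * sinh Umax / (pb c b0 - b0))); [lra|].
  intros b Hb. apply Rabs_def2 in Hb. assert (Hbpos : 0 < b) by lra.
  destruct (ub_spec c T b c_pos T_nonneg Hbpos) as [Hu _].
  assert (Hq := slope_sinh_ge_1 (ub c T b0) (ub c T b)).
  assert (Hid := ub_secant_eq b0 b Hb0 Hbpos).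
  assert (HLip := pb_lipschitz c c_pos b0 b Hb0 Hbpos). fold L in HLip.
  assert (HuU : ub c T b <= Umax) by (apply ub_antitone; lra).
  assert (Hsu := sinh_ge_id _ Hu).
  assert (HsU : sinh (ub c T b) <= sinh Umax) by (generalize (sinh_sub_ge _ _ HuU); lra).
  set (u := ub c T b) in *. set (u0 := ub c T b0) in *.
  set (q := slope _ _ _ _) in *. set (P := pb c b) in *. set (P0 := pb c b0) in *.
  assert (Hgap : Rabs (u - u0) * (P0 - b0) <= Rabs ((b - b0) * u - (P - P0) * sinh u)).
  { rewrite <- Hid, Rabs_mult, (Rabs_right (P0 * q - b0)) by nra.
    apply Rmult_le_compat_l; [apply Rabs_pos | nra]. }
  assert (Htri : Rabs ((b - b0) * u - (P - P0) * sinh u) <= (1 + L) * sinh Umax * Rabs (b - b0)).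
  { eapply Rle_trans; [apply Rabs_triang|]. rewrite Rabs_Ropp, !Rabs_mult.
    rewrite (Rabs_right u), (Rabs_right (sinh u)) by lra.
    set (d := Rabs (b - b0)). assert (0 <= d) by apply Rabs_pos.
    assert (d * u <= d * sinh Umax) by (apply Rmult_le_compat_l; lra).
    assert (Rabs (P - P0) * sinh u <= L * d * sinh Umax)
      by (apply Rmult_le_compat; [apply Rabs_pos | lra | auto | auto]).
    lra. }
  apply (Rmult_le_reg_r (P0 - b0)); [lra|].
  replace ((1 + L) * sinh Umax / (P0 - b0) * Rabs (b - b0) * (P0 - b0))
    with ((1 + L) * sinh Umax * Rabs (b - b0)) by (field; lra).
  lra.
Qed.

(* Implicit differentiation: by [ub_secant_eq] the difference quotient of [ub] at [b0] is a
   quotient of functions continuous at [b0]. *)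
Lemma is_derive_ub b0 : 0 < b0 ->
  is_derive (ub c T) b0
    ((ub c T b0 - (2 * b0 + c) / (2 * pb c b0) * sinh (ub c T b0)) /
     (pb c b0 * cosh (ub c T b0) - b0)).
Proof.
  intros Hb0. generalize (pb_gt c c_pos b0 Hb0). intros HbP0.
  set (u0 := ub c T b0) in *. set (P0 := pb c b0) in *. set (dP0 := (2 * b0 + c) / (2 * P0)).
  set (q := fun b => slope sinh (cosh u0) u0 (ub c T b)).
  set (r := fun b => slope (pb c) dP0 b0 b).
  set (g := fun b => (ub c T b - r b * sinh (ub c T b)) * / (P0 * q b - b0)).
  assert (Hden : forall b, P0 - b0 <= P0 * q b - b0)
    by (intros b; generalize (slope_sinh_ge_1 u0 (ub c T b)); unfold q; nra).
  assert (Hq0 : q b0 = cosh u0) by (unfold q, slope; fold u0; now destruct (Req_EM_T u0 u0)).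
  assert (Hr0 : r b0 = dP0) by (unfold r, slope; now destruct (Req_EM_T b0 b0)).
  replace ((u0 - dP0 * sinh u0) / (P0 * cosh u0 - b0)) with (g b0)
    by (unfold g; rewrite Hq0, Hr0; fold u0; unfold Rdiv; ring).
  apply (is_derive_of_slope _ g b0 b0); [lra | |].
  - intros b Hb. apply Rabs_def2 in Hb. assert (Hbpos : 0 < b) by lra.
    generalize (ub_secant_eq b0 b Hb0 Hbpos) (slope_spec (pb c) dP0 b0 b) (Hden b).
    unfold g, q, r. fold u0 P0. intros Hid HP Hd. rewrite HP in Hid.
    apply (Rmult_eq_reg_r (P0 * slope sinh (cosh u0) u0 (ub c T b) - b0)); [|lra].
    rewrite Hid. field. lra.
  - assert (Hu := ub_continuous b0 Hb0).
    assert (Hsinh : forall x, continuous sinh x)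
      by (intros x; apply continuity_pt_filterlim, derivable_continuous_pt, derivable_pt_sinh).
    assert (Hqc : continuous q b0).
    { apply (continuous_comp (ub c T) (slope sinh (cosh u0) u0)); [auto|].
      apply slope_continuous, is_derive_Reals, derivable_pt_lim_sinh. }
    assert (Hrc : continuous r b0) by (apply slope_continuous, is_derive_pb; auto).
    apply (continuous_mult (fun b => ub c T b - r b * sinh (ub c T b))).
    + apply (continuous_minus (ub c T)); [auto|].
      apply (continuous_mult r); [auto|]. apply (continuous_comp (ub c T) sinh); auto.
    + apply continuous_Rinv_comp; [|rewrite Hq0; generalize (cosh_ge_1 u0); nra].
      apply (continuous_minus (fun b => P0 * q b)); [|apply continuous_const].
      apply (continuous_mult (fun _ => P0)); [apply continuous_const | auto].
Qed.

End Ub.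

(* [dRb_num0 c b] is [2 b + c / 2 + b c / (2 p) - 2 p] with [p = pb c b], written so that
   its positivity is visible. *)
Definition dRb_num0 (c b : R) : R :=
  b * c ^ 3 / (2 * pb c b * ((4 * b + c) * pb c b + 4 * b ^ 2 + 3 * b * c)).

Definition dRb_num (c b u : R) : R :=
  dRb_num0 c b + b * c / (2 * pb c b) * (cosh u - 1) + pb c b * hh u.

Definition dRb_den (c b u : R) : R := (pb c b - b) + pb c b * (cosh u - 1).

Definition dRb (c T b : R) : R := dRb_num c b (ub c T b) / dRb_den c b (ub c T b).

Lemma dRb_num_pos c b u : 0 < c -> 0 < b -> 0 <= u -> 0 < dRb_num c b u.
Proof.
  intros Hc Hb Hu. generalize (pb_gt c Hc b Hb) (cosh_ge_1 u) (hh_ge u Hu) (pow_le u 4 Hu).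
  unfold dRb_num, dRb_num0. set (P := pb c b). intros HbP Hch Hh Hu4.
  assert (0 < b * c ^ 3 / (2 * P * ((4 * b + c) * P + 4 * b ^ 2 + 3 * b * c))).
  { assert (0 < (4 * b + c) * P) by (apply Rmult_lt_0_compat; lra).
    assert (0 < b ^ 2) by (apply pow_lt; lra).
    assert (0 < b * c) by nra.
    apply Rdiv_lt_0_compat; [apply Rmult_lt_0_compat; [lra | apply pow_lt; lra]|].
    apply Rmult_lt_0_compat; lra. }
  assert (0 <= b * c / (2 * P) * (cosh u - 1))
    by (apply Rmult_le_pos; [apply Rdiv_le_0_compat; nra | lra]).
  assert (0 <= P * hh u) by (apply Rmult_le_pos; lra).
  lra.
Qed.

Lemma dRb_den_pos c b u : 0 < c -> 0 < b -> 0 < dRb_den c b u.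
Proof.
  intros Hc Hb. generalize (pb_gt c Hc b Hb) (cosh_ge_1 u). unfold dRb_den. nra.
Qed.

Lemma dRb_pos c T b : 0 < c -> 0 <= T -> 0 < b -> 0 < dRb c T b.
Proof.
  intros Hc HT Hb. destruct (ub_spec c T b Hc HT Hb) as [Hu _].
  apply Rdiv_lt_0_compat; [apply dRb_num_pos | apply dRb_den_pos]; auto.
Qed.

Lemma derivative_Rb_eq c b u : 0 < c -> 0 < b ->
  (2 * b + c) / (2 * pb c b) * cosh u
  + pb c b * (sinh u * ((u - (2 * b + c) / (2 * pb c b) * sinh u) / (pb c b * cosh u - b))) - 1
  = dRb_num c b u / dRb_den c b u.
Proof.
  intros Hc Hb.
  generalize (pb_sq c Hc b Hb) (pb_gt c Hc b Hb) (cosh_sq_sub_sinh_sq u) (cosh_ge_1 u).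
  unfold dRb_num, dRb_num0, dRb_den, hh.
  set (P := pb c b). set (ch := cosh u). set (sh := sinh u). intros HP HbP Hch Hch1.
  assert (HX : 0 < (4 * b + c) * P + 4 * b ^ 2 + 3 * b * c) by nra.
  replace ((P - b) + P * (ch - 1)) with (P * ch - b) by ring.
  apply (Rmult_eq_reg_r ((P * ch - b) * (2 * P) * ((4 * b + c) * P + 4 * b ^ 2 + 3 * b * c)));
    [| apply Rmult_integral_contrapositive; split;
       [apply Rmult_integral_contrapositive; split|]; nra].
  field_simplify; try nra.
  assert (E1 : sh ^ 2 = ch ^ 2 - 1) by lra.
  assert (E2 : P ^ 2 = b * b + c * b) by (rewrite <- HP; ring).
  assert (E3 : P ^ 3 = P * (b * b + c * b)) by (rewrite <- HP; ring).
  rewrite E1, E3, E2. ring.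
Qed.

Lemma is_derive_Rb c T b0 : 0 < c -> 0 <= T -> 0 < b0 -> is_derive (Rb c T) b0 (dRb c T b0).
Proof.
  intros Hc HT Hb0.
  assert (HP := is_derive_pb c Hc b0 Hb0). assert (HU := is_derive_ub c T Hc HT b0 Hb0).
  unfold dRb. rewrite <- derivative_Rb_eq by auto.
  generalize (pb_gt c Hc b0 Hb0) (cosh_ge_1 (ub c T b0)). intros HbP Hch.
  unfold Rb, cosh, sinh in *. auto_derive.
  - repeat split; eexists; eassumption.
  - replace (Derive (fun x => pb c x) b0) with ((2 * b0 + c) / (2 * pb c b0))
      by (symmetry; now apply is_derive_unique).
    replace (Derive (fun x => ub c T x) b0) with
      ((ub c T b0 - (2 * b0 + c) / (2 * pb c b0) * ((exp (ub c T b0) - exp (- ub c T b0)) / 2)) /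
       (pb c b0 * ((exp (ub c T b0) + exp (- ub c T b0)) / 2) - b0))
      by (symmetry; now apply is_derive_unique).
    field. split; nra.
Qed.

(** * Comparability *)

Definition comparable (M x y : R) : Prop := 0 <= x /\ 0 <= y /\ x <= M * y /\ y <= M * x.

Lemma comparable_sym M x y : comparable M x y -> comparable M y x.
Proof. unfold comparable. tauto. Qed.

Lemma comparable_pos M x y : 0 < x -> comparable M x y -> 0 < y.
Proof. intros Hx (_ & Hy & Hxy & _). destruct Hy as [|<-]; [auto | lra]. Qed.

Lemma comparable_weaken M M' x y : M <= M' -> comparable M x y -> comparable M' x y.
Proof. intros HM (Hx & Hy & Hxy & Hyx). repeat split; auto; nra. Qed.

Lemma comparable_of_le M x y : 1 <= M -> 0 <= x -> x <= y -> y <= M * x -> comparable M x y.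
Proof. intros HM Hx Hxy Hyx. repeat split; auto; nra. Qed.

Lemma comparable_refl M x : 1 <= M -> 0 <= x -> comparable M x x.
Proof. intros HM Hx. apply comparable_of_le; auto; nra. Qed.

Lemma comparable_add M x1 x2 y1 y2 :
  comparable M x1 y1 -> comparable M x2 y2 -> comparable M (x1 + x2) (y1 + y2).
Proof. unfold comparable. intros. repeat split; lra. Qed.

Lemma comparable_mul M N x1 x2 y1 y2 :
  comparable M x1 y1 -> comparable N x2 y2 -> comparable (M * N) (x1 * x2) (y1 * y2).
Proof.
  intros (Hx1 & Hy1 & H1 & H1') (Hx2 & Hy2 & H2 & H2').
  repeat split; try (apply Rmult_le_pos; auto).
  - replace (M * N * (y1 * y2)) with ((M * y1) * (N * y2)) by ring. apply Rmult_le_compat; auto.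
  - replace (M * N * (x1 * x2)) with ((M * x1) * (N * x2)) by ring. apply Rmult_le_compat; auto.
Qed.

Lemma comparable_scale M k x y : 0 <= k -> comparable M x y -> comparable M (k * x) (k * y).
Proof. intros Hk (Hx & Hy & Hxy & Hyx). repeat split; nra. Qed.

Lemma comparable_inv M x y : 0 < x -> 0 < y -> comparable M x y -> comparable M (/ x) (/ y).
Proof.
  intros Hx Hy (_ & _ & Hxy & Hyx).
  assert (0 < / x) by now apply Rinv_0_lt_compat. assert (0 < / y) by now apply Rinv_0_lt_compat.
  repeat split; try lra.
  - apply (Rmult_le_reg_r (x * y)); [nra|]. field_simplify; lra.
  - apply (Rmult_le_reg_r (x * y)); [nra|]. field_simplify; lra.
Qed.

Lemma comparable_div M N x1 x2 y1 y2 : 0 < x2 -> 0 < y2 ->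
  comparable M x1 y1 -> comparable N x2 y2 -> comparable (M * N) (x1 / x2) (y1 / y2).
Proof. intros. apply comparable_mul, comparable_inv; auto. Qed.

Lemma comparable_pow M x y n : comparable M x y -> comparable (M ^ n) (x ^ n) (y ^ n).
Proof.
  intros H. induction n as [|n IH]; simpl.
  - apply comparable_refl; lra.
  - now apply comparable_mul.
Qed.

Definition growth_const (K : R) : R := 6 * K ^ 4 * cosh (3 * K).

Lemma growth_const_ge K : 1 <= K ->
  1 <= growth_const K /\ 4 * K <= growth_const K /\ 6 * K ^ 2 <= growth_const K /\
  K ^ 4 * cosh (3 * K) <= growth_const K /\ K ^ 2 * cosh (3 * K) <= growth_const K.
Proof.
  intros HK. unfold growth_const. generalize (cosh_ge_1 (3 * K)). intros Hch.
  assert (H2 : 1 <= K ^ 2) by nra. assert (H4 : K ^ 2 <= K ^ 4) by (simpl; nra).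
  assert (K <= K ^ 2) by (simpl; nra).
  assert (0 <= K ^ 4 * (cosh (3 * K) - 1)) by (apply Rmult_le_pos; lra).
  assert (0 <= (K ^ 4 - K ^ 2) * cosh (3 * K)) by (apply Rmult_le_pos; lra).
  repeat split; nra.
Qed.

Lemma le_mul_of_sinh_sub_le s K u1 u2 : 0 <= s < 1 -> 1 <= K -> 0 <= u2 ->
  sinh u1 - s * u1 <= K * (sinh u2 - s * u2) -> u1 <= K * u2.
Proof.
  intros Hs HK Hu2 Hphi. destruct (Rle_or_lt u1 (K * u2)) as [|Hlt]; [auto | exfalso].
  generalize (sinh_mul_sub_lt 1 s (K * u2) u1 ltac:(lra) Hlt) (sinh_mul_ge K u2 HK Hu2). nra.
Qed.

Lemma sinh_le_of_sinh_sub_le s K u1 u2 : 0 <= s <= 1 -> 0 <= K -> 0 <= u1 -> 0 <= u2 ->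
  u1 <= K * u2 -> sinh u1 - s * u1 <= K * (sinh u2 - s * u2) -> sinh u1 <= 2 * K * sinh u2.
Proof.
  intros Hs HK Hu1 Hu2 HuK Hphi. generalize (sinh_ge_id u2 Hu2). intros.
  assert (s * u1 <= u1) by nra. assert (0 <= K * (s * u2)) by nra.
  assert (K * u2 <= K * sinh u2) by (apply Rmult_le_compat_l; lra). lra.
Qed.

Lemma cosh_hh_le_small K u1 u2 : 1 <= K -> 0 <= u1 -> 0 <= u2 <= 3 -> u1 <= K * u2 ->
  cosh u1 - 1 <= growth_const K * (cosh u2 - 1) /\ hh u1 <= growth_const K * hh u2.
Proof.
  intros HK Hu1 Hu2 HuK. destruct (growth_const_ge K HK) as (_ & _ & _ & G4 & G2).
  assert (Hch : 1 <= cosh u1 <= cosh (3 * K))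
    by (split; [apply cosh_ge_1 | apply cosh_le_cosh; nra]).
  assert (HK2 : u1 ^ 2 <= K ^ 2 * u2 ^ 2) by (rewrite <- Rpow_mult_distr; apply pow_incr; lra).
  assert (HK4 : u1 ^ 4 <= K ^ 4 * u2 ^ 4) by (rewrite <- Rpow_mult_distr; apply pow_incr; lra).
  generalize (cosh_sub_1_le u1 Hu1) (hh_le u1 Hu1)
    (cosh_sub_1_ge u2 ltac:(lra)) (hh_ge u2 ltac:(lra)).
  generalize (pow2_ge_0 u1) (pow_le u1 4 Hu1) (pow2_ge_0 u2) (pow_le u2 4 ltac:(lra)).
  generalize (pow2_ge_0 K) (pow_le K 4 ltac:(lra)).
  intros. split.
  - apply Rle_trans with (K ^ 2 * cosh (3 * K) * (u2 ^ 2 / 2)); [nra|].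
    apply Rmult_le_compat; nra.
  - apply Rle_trans with (K ^ 4 * cosh (3 * K) * (u2 ^ 4 / 12)); [nra|].
    apply Rmult_le_compat; nra.
Qed.

Lemma cosh_hh_le_large K u1 u2 : 1 <= K -> 3 <= u2 -> 0 <= u1 <= K * u2 ->
  sinh u1 <= 2 * K * sinh u2 ->
  cosh u1 - 1 <= growth_const K * (cosh u2 - 1) /\ hh u1 <= growth_const K * hh u2.
Proof.
  intros HK Hu2 Hu1 Hs. destruct (growth_const_ge K HK) as (_ & G1 & G2 & _ & _).
  generalize (sinh_ge_id u2 ltac:(lra)) (sinh_lt_cosh u2) (cosh_sub_1_le_sinh u1 ltac:(lra))
    (cosh_sub_1_le_sinh u2 ltac:(lra)) (sinh_nonneg u1 ltac:(lra)) (cosh_ge_1 u1). intros.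
  assert (Hw2 : sinh u2 <= 2 * (cosh u2 - 1)) by lra.
  (* [hh u >= (u - 2) sinh u >= u sinh u / 3] for [u >= 3]. *)
  assert (Hh2 : u2 * sinh u2 <= 3 * hh u2) by (unfold hh; nra).
  split.
  - assert (0 <= cosh u2 - 1) by lra. nra.
  - assert (hh u1 <= u1 * sinh u1) by (unfold hh; lra).
    assert (u1 * sinh u1 <= (K * u2) * (2 * K * sinh u2)) by (apply Rmult_le_compat; lra).
    assert (0 <= hh u2) by nra. nra.
Qed.

Lemma cosh_hh_comparable s K u1 u2 : 0 <= s < 1 -> 1 <= K -> 0 <= u2 <= u1 ->
  sinh u1 - s * u1 <= K * (sinh u2 - s * u2) ->
  comparable (growth_const K) (cosh u1 - 1) (cosh u2 - 1) /\
  comparable (growth_const K) (hh u1) (hh u2).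
Proof.
  intros Hs HK Hu Hphi. destruct (growth_const_ge K HK) as (G1 & _).
  assert (HuK := le_mul_of_sinh_sub_le s K u1 u2 Hs HK ltac:(lra) Hphi).
  assert (Hbound : cosh u1 - 1 <= growth_const K * (cosh u2 - 1) /\
                   hh u1 <= growth_const K * hh u2).
  { destruct (Rle_or_lt u2 3).
    - apply cosh_hh_le_small; lra.
    - apply cosh_hh_le_large; try lra.
      apply (sinh_le_of_sinh_sub_le s); lra. }
  destruct Hbound as [Hw Hh].
  split; apply comparable_sym, comparable_of_le; auto.
  - generalize (cosh_ge_1 u2). lra.
  - generalize (cosh_le_cosh u2 u1 ltac:(lra) ltac:(lra)). lra.
  - generalize (hh_ge u2 ltac:(lra)) (pow_le u2 4 ltac:(lra)). lra.
  - apply hh_le_hh; lra.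
Qed.

Section Comparison.

Variable c : R.
Hypothesis c_pos : 0 < c.

Lemma pb_le_mul K b1 b2 : 1 <= K -> 0 < b1 -> 0 < b2 -> b2 <= K * b1 -> pb c b2 <= K * pb c b1.
Proof.
  intros HK Hb1 Hb2 Hb.
  generalize (pb_sq c c_pos b1 Hb1) (pb_gt c c_pos b1 Hb1)
    (pb_sq c c_pos b2 Hb2) (pb_gt c c_pos b2 Hb2).
  set (P1 := pb c b1). set (P2 := pb c b2). intros HP1 HbP1 HP2 HbP2.
  assert (c * b2 <= K * K * (c * b1)).
  { assert (c * b2 <= K * (c * b1)) by nra. assert (K * (c * b1) <= K * K * (c * b1))
      by (apply Rmult_le_compat_r; nra). lra. }
  assert (b2 * b2 <= (K * b1) * (K * b1)) by (apply Rmult_le_compat; lra).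
  assert (P2 * P2 <= (K * P1) * (K * P1)) by nra.
  assert (0 <= K * P1) by nra.
  destruct (Rle_or_lt P2 (K * P1)); [auto | nra].
Qed.

Lemma pb_comparable K b1 b2 : 1 <= K -> 0 < b1 -> comparable K b1 b2 ->
  comparable K (pb c b1) (pb c b2).
Proof.
  intros HK Hb1 Hb. assert (Hb2 := comparable_pos K b1 b2 Hb1 Hb).
  destruct Hb as (_ & _ & H12 & H21).
  generalize (pb_gt c c_pos b1 Hb1) (pb_gt c c_pos b2 Hb2). intros.
  repeat split; try lra; apply pb_le_mul; auto.
Qed.

Lemma pb_sub_comparable K b1 b2 : 1 <= K -> 0 < b1 -> comparable K b1 b2 ->
  comparable (K * K) (pb c b1 - b1) (pb c b2 - b2).
Proof.
  intros HK Hb1 Hb. assert (Hb2 := comparable_pos K b1 b2 Hb1 Hb).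
  generalize (pb_gt c c_pos b1 Hb1) (pb_gt c c_pos b2 Hb2). intros.
  rewrite !pb_sub_eq by auto. apply comparable_div; try lra.
  - now apply comparable_scale; [lra|].
  - apply comparable_add; [now apply pb_comparable | auto].
Qed.

Lemma dRb_num0_comparable K b1 b2 : 1 <= K -> 0 < b1 -> comparable K b1 b2 ->
  comparable (K ^ 4) (dRb_num0 c b1) (dRb_num0 c b2).
Proof.
  intros HK Hb1 Hb. assert (Hb2 := comparable_pos K b1 b2 Hb1 Hb).
  assert (HP := pb_comparable K b1 b2 HK Hb1 Hb).
  generalize (pb_gt c c_pos b1 Hb1) (pb_gt c c_pos b2 Hb2). intros.
  assert (HKK : K <= K ^ 2) by (simpl; nra).
  assert (Hc : comparable K c c) by (apply comparable_refl; lra).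
  assert (HX : comparable (K ^ 2)
    ((4 * b1 + c) * pb c b1 + 4 * b1 ^ 2 + 3 * b1 * c)
    ((4 * b2 + c) * pb c b2 + 4 * b2 ^ 2 + 3 * b2 * c)).
  { repeat apply comparable_add.
    - replace (K ^ 2) with (K * K) by ring.
      apply comparable_mul; [apply comparable_add; [apply comparable_scale; [lra|]|]|]; auto.
    - apply comparable_scale; [lra|]. now apply comparable_pow.
    - apply (comparable_weaken K); auto.
      replace (3 * b1 * c) with (3 * c * b1) by ring.
      replace (3 * b2 * c) with (3 * c * b2) by ring.
      apply comparable_scale; [lra | auto]. }
  unfold dRb_num0. replace (K ^ 4) with (K * (K * K ^ 2)) by ring.
  apply comparable_div.
  - assert (0 < b1 ^ 2) by (apply pow_lt; lra). apply Rmult_lt_0_compat; [lra|]. nra.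
  - assert (0 < b2 ^ 2) by (apply pow_lt; lra). apply Rmult_lt_0_compat; [lra|]. nra.
  - rewrite !(Rmult_comm _ (c ^ 3)). apply comparable_scale; [apply pow_le; lra | auto].
  - apply comparable_mul; [apply comparable_scale; [lra|] | ]; auto.
Qed.

Lemma dRb_num_comparable K M b1 b2 u1 u2 : 1 <= K -> 1 <= M -> 0 < b1 -> comparable K b1 b2 ->
  comparable M (cosh u1 - 1) (cosh u2 - 1) -> comparable M (hh u1) (hh u2) ->
  comparable (K ^ 4 * M) (dRb_num c b1 u1) (dRb_num c b2 u2).
Proof.
  intros HK HM Hb1 Hb Hw Hh. assert (Hb2 := comparable_pos K b1 b2 Hb1 Hb).
  assert (HP := pb_comparable K b1 b2 HK Hb1 Hb).
  generalize (pb_gt c c_pos b1 Hb1) (pb_gt c c_pos b2 Hb2). intros.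
  assert (HK4 : K <= K ^ 4) by (apply (Rle_pow K 1 4) in HK; [simpl in *; lra | lia]).
  assert (HK2 : K * K <= K ^ 4) by (generalize (Rle_pow K 2 4 HK); simpl; intros; nra).
  unfold dRb_num. repeat apply comparable_add.
  - apply (comparable_weaken (K ^ 4)); [nra|]. now apply dRb_num0_comparable.
  - apply (comparable_weaken (K * K * M)); [nra|]. apply comparable_mul; auto.
    replace (b1 * c) with (c * b1) by ring. replace (b2 * c) with (c * b2) by ring.
    apply comparable_div; try lra; apply comparable_scale; auto; lra.
  - apply (comparable_weaken (K * M)); [nra|]. now apply comparable_mul.
Qed.

Lemma dRb_den_comparable K M b1 b2 u1 u2 : 1 <= K -> 1 <= M -> 0 < b1 -> comparable K b1 b2 ->
  comparable M (cosh u1 - 1) (cosh u2 - 1) ->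
  comparable (K ^ 4 * M) (dRb_den c b1 u1) (dRb_den c b2 u2).
Proof.
  intros HK HM Hb1 Hb Hw.
  assert (HK4 : K <= K ^ 4) by (apply (Rle_pow K 1 4) in HK; [simpl in *; lra | lia]).
  assert (HK2 : K * K <= K ^ 4) by (generalize (Rle_pow K 2 4 HK); simpl; intros; nra).
  unfold dRb_den. apply comparable_add.
  - apply (comparable_weaken (K * K)); [nra|]. now apply pb_sub_comparable.
  - apply (comparable_weaken (K * M)); [nra|]. apply comparable_mul; auto. now apply pb_comparable.
Qed.

End Comparison.

Section UbComparison.

Variables c T K : R.
Hypotheses (c_pos : 0 < c) (T_nonneg : 0 <= T) (K_ge_1 : 1 <= K).

Lemma ub_sinh_sub_le b1 b2 : 0 < b1 -> b1 <= b2 -> b2 <= K * b1 ->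
  sinh (ub c T b1) - b1 / pb c b1 * ub c T b1 <=
  K * (sinh (ub c T b2) - b1 / pb c b1 * ub c T b2).
Proof.
  intros Hb1 Hb12 Hb2K. assert (Hb2 : 0 < b2) by lra.
  destruct (ub_spec c T b1 c_pos T_nonneg Hb1) as [Hu1 E1].
  destruct (ub_spec c T b2 c_pos T_nonneg Hb2) as [Hu2 E2].
  generalize (div_pb_range c c_pos b1 Hb1) (pb_gt c c_pos b1 Hb1) (pb_gt c c_pos b2 Hb2)
    (kappa_le c c_pos b1 b2 Hb1 Hb12)
    (pb_le_mul c c_pos K b1 b2 K_ge_1 Hb1 Hb2 Hb2K) (sinh_ge_id _ Hu2).
  set (u1 := ub c T b1) in *. set (u2 := ub c T b2) in *.
  set (P1 := pb c b1) in *. set (P2 := pb c b2) in *. set (s := b1 / P1).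
  intros Hs HbP1 HbP2 Hkappa HP2 Hs2.
  assert (HT1 : P1 * (sinh u1 - s * u1) = T) by (rewrite <- E1; unfold s; field; lra).
  assert (HsP2 : P2 * s <= b2)
    by (apply (Rmult_le_reg_r P1); [lra|]; unfold s; field_simplify; lra).
  assert (HT2 : T <= P2 * (sinh u2 - s * u2)) by nra.
  assert (0 <= sinh u2 - s * u2) by nra.
  assert (P2 * (sinh u2 - s * u2) <= K * P1 * (sinh u2 - s * u2)) by (apply Rmult_le_compat_r; lra).
  apply (Rmult_le_reg_l P1); [lra|]. nra.
Qed.

Lemma ub_cosh_hh_comparable b1 b2 : 0 < b1 -> b1 <= b2 -> b2 <= K * b1 ->
  comparable (growth_const K) (cosh (ub c T b1) - 1) (cosh (ub c T b2) - 1) /\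
  comparable (growth_const K) (hh (ub c T b1)) (hh (ub c T b2)).
Proof.
  intros Hb1 Hb12 Hb2K.
  destruct (ub_spec c T b2 c_pos T_nonneg ltac:(lra)) as [Hu2 _].
  apply (cosh_hh_comparable (b1 / pb c b1)); auto.
  - now apply div_pb_range.
  - split; [auto | now apply ub_antitone].
  - now apply ub_sinh_sub_le.
Qed.

End UbComparison.

Definition dRb_const (K : R) : R := (K ^ 4 * growth_const K) ^ 2.

Lemma dRb_comparable c T K b1 b2 : 0 < c -> 0 <= T -> 1 <= K -> 0 < b1 -> comparable K b1 b2 ->
  comparable (dRb_const K) (dRb c T b1) (dRb c T b2).
Proof.
  intros Hc HT HK.
  assert (Hle : forall b1 b2, 0 < b1 -> b1 <= b2 -> comparable K b1 b2 ->
                comparable (dRb_const K) (dRb c T b1) (dRb c T b2)).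
  { intros x y Hx Hxy Hb. destruct (growth_const_ge K HK) as [HG _].
    destruct (ub_cosh_hh_comparable c T K Hc HT HK x y Hx Hxy ltac:(apply Hb)) as [Hw Hh].
    replace (dRb_const K) with ((K ^ 4 * growth_const K) * (K ^ 4 * growth_const K))
      by (unfold dRb_const; ring).
    unfold dRb.
    apply comparable_div; [apply dRb_den_pos; lra .. | |];
      [apply dRb_num_comparable | apply dRb_den_comparable]; auto. }
  intros Hb1 Hb. destruct (Rle_or_lt b1 b2) as [Hb12 | Hb21].
  - now apply Hle.
  - apply comparable_sym, Hle; [now apply (comparable_pos K b1) | lra | now apply comparable_sym].
Qed.

(** * Back to the variable a *)

Lemma opp_derive_Rfun_pos m theta l a : 0 < m -> 0 < l -> 0 < a ->
  0 < m / a ^ 3 * dRb (2 * l / m) (Rabs theta) (m / (2 * a ^ 2)).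
Proof.
  intros Hm Hl Ha. apply Rmult_lt_0_compat; [apply Rdiv_lt_0_compat; [lra | apply pow_lt; lra]|].
  apply dRb_pos; [apply Rdiv_lt_0_compat; lra | apply Rabs_pos | now apply div_2sq_pos].
Qed.

Lemma is_derive_Rfun m theta l a : 0 < m -> 0 < l -> 0 < a ->
  is_derive (fun x => Rfun m theta x l) a
    (- (m / a ^ 3 * dRb (2 * l / m) (Rabs theta) (m / (2 * a ^ 2)))).
Proof.
  intros Hm Hl Ha. assert (Hc : 0 < 2 * l / m) by (apply Rdiv_lt_0_compat; lra).
  apply is_derive_ext_loc with (fun x => Rb (2 * l / m) (Rabs theta) (m / (2 * x ^ 2))).
  { exists (mkposreal a Ha). intros x Hx. apply Rabs_def2 in Hx. simpl in Hx.
    unfold minus, plus, opp in Hx; simpl in Hx. symmetry. apply Rfun_eq; lra. }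
  assert (Hg : is_derive (fun x => m / (2 * x ^ 2)) a (- (m / a ^ 3))).
  { auto_derive; [nra | field; lra]. }
  assert (Hf := is_derive_Rb _ (Rabs theta) _ Hc (Rabs_pos theta) (div_2sq_pos m a Hm Ha)).
  set (d := dRb (2 * l / m) (Rabs theta) (m / (2 * a ^ 2))) in *.
  replace (- (m / a ^ 3 * d)) with (scal (- (m / a ^ 3)) d)
    by (unfold scal; simpl; unfold mult; simpl; ring).
  exact (is_derive_comp (Rb (2 * l / m) (Rabs theta)) _ a _ _ Hf Hg).
Qed.

Lemma Rfun_decreasing m theta l a1 a2 : 0 < m -> 0 < l -> 0 < a1 -> a1 < a2 ->
  Rfun m theta a2 l < Rfun m theta a1 l.
Proof.
  intros Hm Hl Ha1 Ha12.
  cut (- Rfun m theta a1 l < - Rfun m theta a2 l); [lra|].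
  apply (incr_function_le (fun x => - Rfun m theta x l) a1 a2
    (fun x => m / x ^ 3 * dRb (2 * l / m) (Rabs theta) (m / (2 * x ^ 2))));
    [intros x Hx _; simpl in Hx .. | apply Rle_refl | auto | apply Rle_refl].
  - set (d := m / x ^ 3 * _). rewrite <- (Ropp_involutive d).
    apply (is_derive_opp (fun x => Rfun m theta x l)), is_derive_Rfun; lra.
  - apply opp_derive_Rfun_pos; lra.
Qed.

Lemma Rabs_Derive_Rfun m theta l a : 0 < m -> 0 < l -> 0 < a ->
  Rabs (Derive (fun x => Rfun m theta x l) a)
  = m / a ^ 3 * dRb (2 * l / m) (Rabs theta) (m / (2 * a ^ 2)).
Proof.
  intros Hm Hl Ha.
  replace (Derive (fun x => Rfun m theta x l) a)
    with (- (m / a ^ 3 * dRb (2 * l / m) (Rabs theta) (m / (2 * a ^ 2))))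
    by (symmetry; now apply is_derive_unique, is_derive_Rfun).
  rewrite Rabs_Ropp. apply Rabs_right, Rle_ge, Rlt_le, opp_derive_Rfun_pos; auto.
Qed.

Lemma comparable_of_interval C a x y : 1 <= C -> 0 < a ->
  a / C <= x <= C * a -> a / C <= y <= C * a -> comparable (C ^ 2) x y.
Proof.
  intros HC Ha Hx Hy.
  assert (HaC : 0 < a / C) by (apply Rdiv_lt_0_compat; lra).
  assert (Hax : a <= C * x)
    by (apply (Rmult_le_reg_r (/ C)); [apply Rinv_0_lt_compat; lra | field_simplify; lra]).
  assert (Hay : a <= C * y)
    by (apply (Rmult_le_reg_r (/ C)); [apply Rinv_0_lt_compat; lra | field_simplify; lra]).
  repeat split; simpl; nra.
Qed.

Lemma Rabs_Derive_Rfun_comparable m theta l C0 a alpha beta :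
  0 < m -> 0 < l -> 1 <= C0 -> 0 < a ->
  a / C0 <= alpha <= C0 * a -> a / C0 <= beta <= C0 * a ->
  comparable ((C0 ^ 2) ^ 3 * dRb_const ((C0 ^ 2) ^ 2))
    (Rabs (Derive (fun x => Rfun m theta x l) alpha))
    (Rabs (Derive (fun x => Rfun m theta x l) beta)).
Proof.
  intros Hm Hl HC0 Ha Halpha Hbeta.
  assert (Hab := comparable_of_interval C0 a alpha beta HC0 Ha Halpha Hbeta).
  assert (Hal : 0 < alpha).
  { apply Rlt_le_trans with (a / C0); [apply Rdiv_lt_0_compat|]; lra. }
  assert (Hbe := comparable_pos _ _ _ Hal Hab).
  rewrite !Rabs_Derive_Rfun by auto. unfold Rdiv at 1 3.
  apply comparable_mul.
  - apply comparable_scale; [lra|]. apply comparable_inv; [apply pow_lt; lra .. |].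
    now apply comparable_pow.
  - apply dRb_comparable;
      [apply Rdiv_lt_0_compat; lra | apply Rabs_pos | | now apply div_2sq_pos |].
    + apply pow_R1_Rle, pow_R1_Rle, HC0.
    + unfold Rdiv. apply comparable_scale; [lra|]. apply comparable_inv.
      1, 2: apply Rmult_lt_0_compat; [lra | apply pow_lt; lra].
      apply comparable_scale; [lra|]. now apply comparable_pow.
Qed.

Lemma dRb_const_ge_1 K : 1 <= K -> 1 <= dRb_const K.
Proof.
  intros HK. destruct (growth_const_ge K HK) as [HG _].
  apply pow_R1_Rle. generalize (pow_R1_Rle K 4 HK). nra.
Qed.

Theorem lemma2p17 (m : R) (hm : 0 < m) :
  (forall theta l : R, 0 < l ->
     forall a1 a2 : R, 0 < a1 -> a1 < a2 ->
       Rfun m theta a2 l < Rfun m theta a1 l) /\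
  (forall C0 : R, 1 <= C0 ->
     exists C : R, 1 <= C /\
       forall theta a l : R, 0 < a -> 0 < l ->
         forall alpha beta : R,
           a / C0 <= alpha <= C0 * a ->
           a / C0 <= beta <= C0 * a ->
           Rabs (Derive (fun x => Rfun m theta x l) alpha)
             <= C * Rabs (Derive (fun x => Rfun m theta x l) beta)).
Proof.
  split.
  - intros theta l Hl a1 a2 Ha1 Ha12. now apply Rfun_decreasing.
  - intros C0 HC0. exists ((C0 ^ 2) ^ 3 * dRb_const ((C0 ^ 2) ^ 2)). split.
    + assert (1 <= (C0 ^ 2) ^ 3) by (apply pow_R1_Rle, pow_R1_Rle, HC0).
      assert (1 <= dRb_const ((C0 ^ 2) ^ 2))
        by (apply dRb_const_ge_1, pow_R1_Rle, pow_R1_Rle, HC0).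
      nra.
    + intros theta a l Ha Hl alpha beta Halpha Hbeta.
      apply (Rabs_Derive_Rfun_comparable m theta l C0 a alpha beta); auto.
Qed.
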